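(* Let $d\ge1$, $k\ge1$, and let $G=(V,D)$ be a $k$-fold $\mathcal{R}_d$-circuit with at most one technicolour vertex. Then $G$ is a trivial $k$-fold $\mathcal{R}_d$-circuit.
   Context: For a graph $G=(V,E)$ and a generic $p:V\to\mathbb{R}^d$ (coordinates algebraically independent over $\mathbb{Q}$), the rigidity matrix has a row for each $uv\in E$ with $p(u)-p(v)$ in the $d$ columns of $u$, $p(v)-p(u)$ in those of $v$, zeros elsewhere; $\mathcal{R}_d$ is its row matroid, with rank $r_d$. A set of edges is cyclic if it is a union of $\mathcal{R}_d$-circuits. $(V,D)$ is a $k$-fold $\mathcal{R}_d$-circuit if $D$ is cyclic and $r_d(D)=|D|-k$. Its principal partition is the partition $\{A_1,\dots,A_\ell\}$ of $D$ such that $\{D\setminus A_i\}$ is exactly the set of $(k-1)$-fold $\mathcal{R}_d$-circuits contained in $D$ (one always has $\ell\ge k$); it is trivial if $\ell=k$. A vertex is technicolour if it is incident with edges from at least two parts of the principal partition. *)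

From HB Require Import structures.
From mathcomp Require Import all_boot all_order all_algebra.
From mathcomp Require Import reals.
From mathcomp Require Import mpoly.
Set Implicit Arguments. Unset Strict Implicit. Unset Printing Implicit Defensive.
Import Order.TTheory GRing.Theory Num.Theory.
Local Open Scope ring_scope.

Section Rigidity.
Variables (R : realType) (T : finType) (d : nat).

Definition is_edge (e : {set T}) : bool := #|e| == 2%N.

Definition coords (p : T -> 'rV[R]_d) : 'rV[R]_(#|T| * d) :=
  mxvec (\matrix_(a < #|T|, i < d) p (enum_val a) 0 i).

Definition generic (p : T -> 'rV[R]_d) : Prop :=
  forall P : {mpoly rat[#|T| * d]}, P != 0 ->
    (map_mpoly (ratr : rat -> R) P).@[fun j => coords p 0 j] != 0.

(* Row of the rigidity matrix for edge e = uv: in the columns of u the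
   vector p(u)-p(v), in those of v the vector p(v)-p(u), zero elsewhere. *)
Definition rig_row (p : T -> 'rV[R]_d) (e : {set T}) : 'rV[R]_(#|T| * d) :=
  mxvec (\matrix_(a < #|T|, i < d)
     (if enum_val a \in e then
        \sum_(x in e :\ enum_val a) (p (enum_val a) 0 i - p x 0 i)
      else 0)).

Definition rd (p : T -> 'rV[R]_d) (F : {set {set T}}) : nat :=
  \rank (\sum_(e in F) <<rig_row p e>>)%MS.

Definition indep p (F : {set {set T}}) : bool := rd p F == #|F|.

Definition circuit p (C : {set {set T}}) : bool :=
  ~~ indep p C && [forall e in C, indep p (C :\ e)].

Definition cyclic p (F : {set {set T}}) : bool :=
  [forall e in F, exists C : {set {set T}},
     [&& circuit p C, e \in C & C \subset F]].

Definition kfold_circuit p (k : nat) (D : {set {set T}}) : bool :=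
  cyclic p D && ((rd p D + k)%N == #|D|).

Definition principal_partition p (k : nat) (D : {set {set T}})
    : {set {set {set T}}} :=
  [set D :\: X | X in [set X : {set {set T}} |
                       (X \subset D) && kfold_circuit p k.-1 X]].

Definition trivial_kfold p (k : nat) (D : {set {set T}}) : Prop :=
  #|principal_partition p k D| = k.

Definition technicolour p (k : nat) (D : {set {set T}}) (v : T) : bool :=
  [exists A in principal_partition p k D, exists B in principal_partition p k D,
     [&& A != B, [exists e in A, v \in e] & [exists e in B, v \in e]]].

End Rigidity.

(* Nullity strictly increases along proper inclusions of cyclic edge sets, so two
   distinct (k-1)-fold circuits inside D have union D and the parts D \ X of the
   principal partition are pairwise disjoint; they cover D, because an edge e lies
   outside the (k-1)-fold circuit formed by the circuits of D - e.  Rows of the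
   rigidity matrix are orthogonal to translations and supported on the vertices
   of their edge, so the row spaces of two edge sets sharing at most one vertex
   meet trivially and their nullities add.  A vertex common to two parts is
   technicolour; hence each part A has nullity n(D) - n(D \ A) = 1, and
   k = n(D) is the sum of the nullities of the parts, i.e. their number. *)

From HB Require Import structures.
From mathcomp Require Import all_boot all_order all_algebra.
From mathcomp Require Import reals.
From mathcomp Require Import mpoly.
From mathcomp Require Import zify.
Set Implicit Arguments. Unset Strict Implicit. Unset Printing Implicit Defensive.
Import Order.TTheory GRing.Theory Num.Theory.

Section RigidityMatrix.
Local Open Scope ring_scope.
Variables (R : realType) (T : finType) (d : nat) (p : T -> 'rV[R]_d).
Implicit Types A B F : {set {set T}}.

Definition vertices A : {set T} := [set x | [exists e in A, x \in e]].

Definition rig_span F : 'M[R]_(#|T| * d) := (\sum_(e in F) <<rig_row p e>>)%MS.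

Lemma rdE F : rd p F = \rank (rig_span F). Proof. by []. Qed.

Lemma rig_spanS A B : A \subset B -> (rig_span A <= rig_span B)%MS.
Proof.
move=> AB; apply/sumsmx_subP => e eA.
exact: (sumsmx_sup e) (subsetP AB e eA) _.
Qed.

Lemma rig_spanU A B : (rig_span (A :|: B) == rig_span A + rig_span B)%MS.
Proof.
apply/andP; split; last by rewrite addsmx_sub !rig_spanS ?subsetUl ?subsetUr.
apply/sumsmx_subP => e; rewrite inE => /orP[eA|eB].
  exact: submx_trans (sumsmx_sup e eA _) (addsmxSl _ _).
exact: submx_trans (sumsmx_sup e eB _) (addsmxSr _ _).
Qed.

Lemma rd_le_card F : (rd p F <= #|F|)%N.
Proof.
rewrite rdE /rig_span -sum1_card.
elim/big_rec2: _ => [|e m M _ leMm]; first by rewrite mxrank0.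
apply: leq_trans (mxrank_adds_leqif _ _) _.
by rewrite leq_add // genmxE rank_leq_row.
Qed.

Lemma rdS A B : A \subset B -> (rd p A <= rd p B)%N.
Proof. by move=> AB; rewrite !rdE mxrankS ?rig_spanS. Qed.

Lemma rd_submod A B :
  (rd p (A :|: B) + rd p (A :&: B) <= rd p A + rd p B)%N.
Proof.
rewrite !rdE (eqmx_rank (rig_spanU A B)) -(mxrank_sum_cap (rig_span A)).
by rewrite leq_add2l mxrankS // sub_capmx !rig_spanS ?subsetIl ?subsetIr.
Qed.

Definition balanced_on A (W : 'M[R]_(#|T|, d)) : Prop :=
  (forall a i, enum_val a \notin vertices A -> W a i = 0) /\
  (forall i, \sum_a W a i = 0).

Lemma balanced_on0 A : balanced_on A 0.
Proof. by split=> [a i _|i]; rewrite ?mxE // big1 // => a _; rewrite mxE. Qed.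

Lemma balanced_onD A W1 W2 :
  balanced_on A W1 -> balanced_on A W2 -> balanced_on A (W1 + W2).
Proof.
move=> [out1 sum1] [out2 sum2]; split=> [a i aA|i].
  by rewrite mxE out1 ?out2 ?addr0.
by under eq_bigr do rewrite mxE; rewrite big_split /= sum1 sum2 addr0.
Qed.

Lemma balanced_onZ A c W : balanced_on A W -> balanced_on A (c *: W).
Proof.
move=> [out sum]; split=> [a i aA|i]; first by rewrite mxE out ?mulr0.
by under eq_bigr do rewrite mxE; rewrite -mulr_sumr sum mulr0.
Qed.

Lemma balanced_on_rig_row A e : e \in A -> balanced_on A (vec_mx (rig_row p e)).
Proof.
move=> eA; rewrite /rig_row mxvecK; split=> [a i|i].
  rewrite mxE inE; case: ifP => // ae /existsP[]; exists e; by rewrite eA ae.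
under eq_bigr do rewrite mxE.
rewrite -(big_enum_val (fun x => if x \in e then
    \sum_(y in e :\ x) (p x 0 i - p y 0 i) else 0)) /= -big_mkcond /=.
transitivity (\sum_(x in e) \sum_(y in e) (p x 0 i - p y 0 i)).
  by apply: eq_bigr => x xe; rewrite [RHS](big_setD1 x xe) /= subrr add0r.
under eq_bigr do rewrite sumrB.
by rewrite sumrB exchange_big subrr.
Qed.

Lemma balanced_on_span A w : (w <= rig_span A)%MS -> balanced_on A (vec_mx w).
Proof.
case/sub_sumsmxP => u ->; rewrite raddf_sum.
elim/big_ind: _ => [|W1 W2|e eA]; [exact: balanced_on0 | exact: balanced_onD |].
have /sub_rVP[c ->] : (u e *m <<rig_row p e>> <= rig_row p e)%MS.
  by rewrite -(genmxE (rig_row p e)) submxMl.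
rewrite -[X in balanced_on _ X]/(vec_mx (c *: rig_row p e)) linearZ.
exact/balanced_onZ/balanced_on_rig_row.
Qed.

Lemma balanced_on_shared_eq0 A B W :
    (#|vertices A :&: vertices B| <= 1)%N ->
  balanced_on A W -> balanced_on B W -> W = 0.
Proof.
move=> /card_le1_eqP shared [outA sumA] [outB sumB].
have out a i : enum_val a \notin vertices A :&: vertices B -> W a i = 0.
  by rewrite inE negb_and => /orP[/outA|/outB].
apply/matrixP => a i; rewrite mxE.
have [aAB|] := boolP (enum_val a \in vertices A :&: vertices B); last exact: out.
rewrite -(sumA i) (bigD1 a) //= big1 ?addr0 // => b ba; apply: out.
by apply: contra ba => bAB; apply/eqP/enum_val_inj/shared.
Qed.

Lemma rd_setU_vertices A B : (#|vertices A :&: vertices B| <= 1)%N ->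
  rd p (A :|: B) = (rd p A + rd p B)%N.
Proof.
move=> shared; rewrite !rdE (eqmx_rank (rig_spanU A B)).
rewrite -(mxrank_sum_cap (rig_span A)).
suff -> : (rig_span A :&: rig_span B)%MS = 0 by rewrite mxrank0 addn0.
apply/eqP; rewrite -submx0; apply/row_subP => i; rewrite submx0 -vec_mx_eq0.
have capS := row_sub i (rig_span A :&: rig_span B)%MS.
apply/eqP/(balanced_on_shared_eq0 shared); apply: balanced_on_span.
  exact: submx_trans capS (capmxSl _ _).
exact: submx_trans capS (capmxSr _ _).
Qed.

End RigidityMatrix.

Section RigidityMatroid.
Variables (R : realType) (T : finType) (d : nat) (p : T -> 'rV[R]_d).
Implicit Types A B C F S U X Y : {set {set T}}.
Local Notation r := (rd p).

Lemma rd_set0 : r set0 = 0.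
Proof. by apply/eqP; rewrite -leqn0 -(cards0 {set T}) rd_le_card. Qed.

Lemma rd_setD1 A f : r A <= r (A :\ f) + 1.
Proof.
have := rd_submod p (A :\ f) (A :&: [set f]).
have := subset_leq_card (subsetIr A [set f]); rewrite cards1.
have := rd_le_card p (A :&: [set f]).
by rewrite setUC setID; lia.
Qed.

Lemma rd_setD1_submod S U g : U \subset S -> g \in U ->
  r S + r (U :\ g) <= r (S :\ g) + r U.
Proof.
move=> US gU; have := rd_submod p (S :\ g) U.
rewrite setIDAC (setIidPr US).
suff -> : S :\ g :|: U = S by [].
apply/eqP; rewrite eqEsubset subUset subD1set US /=.
by apply/subsetP => x xS; rewrite !inE xS; case: eqP => [->|]; rewrite ?gU ?orbT.
Qed.

Lemma rd_setD_coloops S F : F \subset S -> (forall f, f \in F -> r (S :\ f) < r S) ->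
  r S = r (S :\: F) + #|F|.
Proof.
have [m] := ubnP #|F|; elim: m F => // m IHm F /ltnSE leFm FS coF.
have [->|[f fF]] := set_0Vmem F; first by rewrite setD0 cards0 addn0.
have subF := subD1set F f.
have := cardsD1 f F; rewrite fF add1n => cardF.
rewrite (IHm (F :\ f)) ?(subset_trans subF) //; last 2 first.
- lia.
- by move=> g /(subsetP subF)/coF.
set U := S :\: (F :\ f).
have fU : f \in U by rewrite !inE eqxx (subsetP FS).
have US : U \subset S := subsetDl _ _.
have -> : S :\: F = U :\ f by rewrite setDDl setUC setD1K.
have := rd_setD1_submod US fU; have := coF f fF; have := rd_setD1 U f; lia.
Qed.

Lemma coloops_indep S : (forall f, f \in S -> r (S :\ f) < r S) -> r S = #|S|.
Proof. by move/(rd_setD_coloops (subxx S)); rewrite setDv rd_set0. Qed.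

Lemma circuit_rd_setD1 C S e : circuit p C -> e \in C -> C \subset S ->
  r (S :\ e) = r S.
Proof.
case/andP=> /eqP depC /forall_inP indepC eC CS.
have := rd_setD1_submod CS eC; have := eqP (indepC e eC).
have := cardsD1 e C; rewrite eC; have := rd_le_card p C.
have := rdS p (subD1set S e); lia.
Qed.

Lemma rd_setD1_circuit S e : e \in S -> r (S :\ e) = r S ->
  exists C, [&& circuit p C, e \in C & C \subset S].
Proof.
move=> eS rSe.
(* A minimal set in which [e] is spanned by the other elements is a circuit. *)
pose spans_e C := (e \in C) && (r (C :\ e) == r C).
have [C /minsetP[/andP[eC /eqP rCe] minC] CS] : {C | minset spans_e C & C \subset S}.
  by apply: minset_exists; rewrite /spans_e eS rSe eqxx.
have swapC f : C :\ f :\ e = C :\ e :\ f by rewrite !setDDl setUC.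
have dropC f : f \in C -> f != e -> r (C :\ f :\ e) < r (C :\ f).
  move=> fC fe; rewrite ltn_neqAle rdS ?subD1set // andbT; apply/eqP => rCfe.
  have /minC CfC : spans_e (C :\ f) by rewrite /spans_e !inE eq_sym fe eC rCfe eqxx.
  by move: fC; rewrite -CfC ?subD1set // !inE eqxx.
have coloopCe f : f \in C :\ e -> r (C :\ e :\ f) < r (C :\ e).
  rewrite !inE => /andP[fe fC]; rewrite -swapC rCe.
  exact: leq_trans (dropC f fC fe) (rdS p (subD1set C f)).
have indepCe := coloops_indep coloopCe.
have := cardsD1 e C; rewrite eC add1n => cardC.
exists C; apply/and3P; split=> //; apply/andP; split.
  by rewrite /indep -rCe indepCe; lia.
apply/forall_inP => f fC; rewrite /indep eqn_leq rd_le_card /=.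
have [-> //|fe] := eqVneq f e; first by rewrite indepCe.
have [cardCf] : #|C :\ e|.+1 = #|C :\ f|.+1 by rewrite -cardC (cardsD1 f C) fC.
rewrite -cardCf -indepCe.
by have := dropC f fC fe; have := rd_setD1 (C :\ e) f; rewrite swapC; lia.
Qed.

Definition nullity F := #|F| - r F.

Lemma kfold_circuitE k D : kfold_circuit p k D = cyclic p D && (nullity D == k).
Proof.
rewrite /kfold_circuit /nullity; congr (_ && _).
by have := rd_le_card p D => le_rD; apply/eqP/eqP; lia.
Qed.

Lemma nullityS X Y : X \subset Y -> nullity X <= nullity Y.
Proof.
move=> XY; have := rd_submod p (Y :&: X) (Y :\: X); have := cardsID X Y.
rewrite setID (setIidPr XY) /nullity.
by have := rd_le_card p X; have := rd_le_card p (Y :\: X); lia.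
Qed.

Lemma circuit_nullity_setD1 C S e : circuit p C -> e \in C -> C \subset S ->
  nullity S = (nullity (S :\ e)).+1.
Proof.
move=> cC eC CS; have eS := subsetP CS e eC.
rewrite /nullity (circuit_rd_setD1 cC eC CS) (cardsD1 e S) eS.
have := rd_le_card p (S :\ e); rewrite (circuit_rd_setD1 cC eC CS); lia.
Qed.

Lemma cyclic_nullity_proper X Y : cyclic p Y -> X \proper Y -> nullity X < nullity Y.
Proof.
move=> /forall_inP cycY /properP[XY [e eY eX]].
have /existsP[C /and3P[cC eC CY]] := cycY e eY.
rewrite (circuit_nullity_setD1 cC eC CY) ltnS nullityS //.
apply/subsetP => x xX; rewrite !inE (subsetP XY) // andbT.
by apply: contraNneq eX => <-.
Qed.

Lemma cyclicU X Y : cyclic p X -> cyclic p Y -> cyclic p (X :|: Y).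
Proof.
move=> /forall_inP cycX /forall_inP cycY; apply/forall_inP => e.
rewrite inE => /orP[/cycX|/cycY] /existsP[C /and3P[cC eC CXY]]; apply/existsP; exists C.
  by rewrite cC eC (subset_trans CXY (subsetUl _ _)).
by rewrite cC eC (subset_trans CXY (subsetUr _ _)).
Qed.

Definition cyclic_part S :=
  [set e in S | [exists C, [&& circuit p C, e \in C & C \subset S]]].

Lemma cyclic_part_sub S : cyclic_part S \subset S.
Proof. by apply/subsetP => e; rewrite inE => /andP[]. Qed.

Lemma cyclic_part_cyclic S : cyclic p (cyclic_part S).
Proof.
apply/forall_inP => e; rewrite inE => /andP[_ /existsP[C /and3P[cC eC CS]]].
apply/existsP; exists C; rewrite cC eC; apply/subsetP => f fC.
by rewrite inE (subsetP CS) //=; apply/existsP; exists C; rewrite cC fC CS.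
Qed.

Lemma nullity_cyclic_part S : nullity (cyclic_part S) = nullity S.
Proof.
have coloops f : f \in S :\: cyclic_part S -> r (S :\ f) < r S.
  rewrite !inE => /andP[fnc fS]; rewrite ltn_neqAle rdS ?subD1set // andbT.
  by apply: contraNneq fnc => /(rd_setD1_circuit fS)/existsP; rewrite fS.
have := rd_setD_coloops (subsetDl _ _) coloops.
rewrite setDDr setDv set0U (setIidPr (cyclic_part_sub S)) /nullity cardsD.
rewrite (setIidPr (cyclic_part_sub S)).
have := subset_leq_card (cyclic_part_sub S); have := rd_le_card p (cyclic_part S).
have := rd_le_card p S; lia.
Qed.

Lemma nullity_setU A B : [disjoint A & B] ->
  (#|vertices A :&: vertices B| <= 1)%N -> nullity (A :|: B) = nullity A + nullity B.
Proof.
move=> AB shared; rewrite /nullity rd_setU_vertices // cardsU disjoint_setI0 // cards0.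
have := rd_le_card p A; have := rd_le_card p B; lia.
Qed.

End RigidityMatroid.

Lemma setDDK (T : finType) (A B : {set T}) : A \subset B -> B :\: (B :\: A) = A.
Proof. by move=> AB; rewrite setDDr setDv set0U (setIidPr AB). Qed.

Section PrincipalPartition.
Variables (R : realType) (T : finType) (d k : nat) (p : T -> 'rV[R]_d).
Variable D : {set {set T}}.
Hypotheses (k_gt0 : 0 < k) (kD : kfold_circuit p k D).
Implicit Types A B X Y : {set {set T}}.
Local Notation P := (principal_partition p k D).
Local Notation nullity := (nullity p).

Let cycD : cyclic p D. Proof. by case/andP: kD. Qed.
Let nullityD : nullity D = k.
Proof. by move: kD; rewrite kfold_circuitE => /andP[_ /eqP]. Qed.

Lemma mem_principal_partition A :
  (A \in P) = (A \subset D) && kfold_circuit p k.-1 (D :\: A).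
Proof.
apply/imsetP/andP => [[X] | [AD kA]].
  by rewrite inE => /andP[XD kX] ->; rewrite subsetDl setDDK.
by exists (D :\: A); rewrite ?setDDK // inE subsetDl.
Qed.

Lemma kfold_circuit_pred_setU X Y : X \subset D -> Y \subset D ->
  kfold_circuit p k.-1 X -> kfold_circuit p k.-1 Y -> X != Y -> X :|: Y = D.
Proof.
wlog YX : X Y / ~~ (Y \subset X) => [hwlog XD YD kX kY XY|].
  have [YX|] := boolP (Y \subset X); last by move=> nYX; apply: hwlog.
  rewrite setUC; apply: hwlog; rewrite 1?eq_sym //.
  by apply: contra XY => XY; rewrite eqEsubset XY.
move=> XD YD; rewrite !kfold_circuitE => /andP[cycX /eqP nX] /andP[cycY _] _.
have := cyclic_nullity_proper (cyclicU cycX cycY) (properUl YX).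
rewrite nX => ltXY; apply/eqP; rewrite eqEproper subUset XD YD /=.
by apply/negP => /(cyclic_nullity_proper cycD); lia.
Qed.

Lemma principal_partition_partition : partition P D.
Proof.
apply/and3P; split.
- rewrite eqEsubset; apply/andP; split.
    by apply/bigcupsP => A; rewrite mem_principal_partition => /andP[].
  apply/subsetP => e eD; have /existsP[C /and3P[cC eC CD]] := forall_inP cycD e eD.
  set X := cyclic_part p (D :\ e).
  apply/bigcupP; exists (D :\: X).
    rewrite mem_principal_partition subsetDl.
    rewrite setDDK ?(subset_trans (cyclic_part_sub _ _) (subD1set _ _)) //.
    rewrite kfold_circuitE cyclic_part_cyclic nullity_cyclic_part.
    by rewrite -nullityD (circuit_nullity_setD1 cC eC CD) /=.
  rewrite inE eD andbT; apply/negP => /(subsetP (cyclic_part_sub _ _)).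
  by rewrite !inE eqxx.
- apply/trivIsetP => A B; rewrite !mem_principal_partition.
  move=> /andP[AD kA] /andP[BD kB] AB; rewrite -setI_eq0 -subset0.
  have XY : D :\: A != D :\: B.
    by apply: contra AB => /eqP ABD; rewrite -(setDDK AD) ABD setDDK.
  have := kfold_circuit_pred_setU (subsetDl _ _) (subsetDl _ _) kA kB XY.
  by rewrite -(setDv D) => {2}<-; rewrite setDUr !setDDK.
- rewrite mem_principal_partition setD0 kfold_circuitE nullityD.
  by rewrite gtn_eqF ?ltn_predL // !andbF.
Qed.

Lemma technicolour_shared A B : A \in P -> B \subset D -> [disjoint A & B] ->
  vertices A :&: vertices B \subset [set v | technicolour p k D v].
Proof.
move=> AP BD AB; apply/subsetP => v; rewrite !inE => /andP[vA /existsP[f /andP[fB vf]]].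
have /bigcupP[C CP fC] : f \in cover P.
  by rewrite (cover_partition principal_partition_partition) (subsetP BD).
apply/existsP; exists A; apply/andP; split=> //; apply/existsP; exists C.
rewrite CP vA /=; apply/andP; split; last by apply/existsP; exists f; rewrite fC.
by apply: contraTneq fC => <-; rewrite (disjointFl AB fB).
Qed.

Hypothesis technicolour_le1 : #|[set v | technicolour p k D v]| <= 1.

Lemma nullity_setU_part A B : A \in P -> B \subset D -> [disjoint A & B] ->
  nullity (A :|: B) = nullity A + nullity B.
Proof.
move=> AP BD AB; apply: nullity_setU => //.
exact: leq_trans (subset_leq_card (technicolour_shared AP BD AB)) technicolour_le1.
Qed.

Lemma nullity_cover (Q : {set {set {set T}}}) :
  Q \subset P -> nullity (cover Q) = \sum_(A in Q) nullity A.
Proof.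
have trivP : trivIset P by case/and3P: principal_partition_partition.
have [m] := ubnP #|Q|; elim: m Q => // m IHm Q /ltnSE leQm QP.
have [->|[A AQ]] := set_0Vmem Q.
  by rewrite /cover !big_set0 /nullity cards0 rd_set0.
have QAP : Q :\ A \subset P := subset_trans (subD1set Q A) QP.
have AP := subsetP QP A AQ.
rewrite /cover !(big_setD1 A AQ) /= nullity_setU_part //.
- by rewrite -IHm // (leq_trans _ leQm) // (cardsD1 A Q) AQ.
- by apply/bigcupsP => B /(subsetP QAP); rewrite mem_principal_partition => /andP[].
apply/bigcup_disjoint => B; rewrite !inE => /andP[BA BQ].
by apply: (trivIsetP trivP) => //; [exact: subsetP QP B BQ | rewrite eq_sym].
Qed.

Lemma nullity_part A : A \in P -> nullity A = 1.
Proof.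
move=> AP; have := AP; rewrite mem_principal_partition kfold_circuitE.
case/and3P => AD _ /eqP nDA.
have disjA : [disjoint A & D :\: A].
  by rewrite disjoint_sym; case/subsetDP: (subxx (D :\: A)).
have := nullity_setU_part AP (subsetDl D A) disjA.
by rewrite -{1}(setIidPr AD) setID nullityD nDA; lia.
Qed.

Lemma card_principal_partition : #|P| = k.
Proof.
have partP := principal_partition_partition.
rewrite -sum1_card -[RHS]nullityD -[in RHS](cover_partition partP) nullity_cover //.
by apply: eq_bigr => A /nullity_part.
Qed.

End PrincipalPartition.

Local Open Scope ring_scope.

Theorem proposition3p10 (R : realType) (T : finType) (d k : nat)
    (p : T -> 'rV[R]_d) (D : {set {set T}}) :
  (1 <= d)%N -> (1 <= k)%N ->
  generic p ->
  (forall e, e \in D -> is_edge e) ->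
  kfold_circuit p k D ->
  (#|[set v : T | technicolour p k D v]| <= 1)%N ->
  trivial_kfold p k D.
Proof.
move=> _ k_gt0 _ _ kD technicolour_le1.
exact: card_principal_partition k_gt0 kD technicolour_le1.
Qed.
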